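(* Let $p=2^{\ell}\pm1$ be a prime with $\ell\ge1$, and let $n\ge k+2$, $k\ge 2$, $\mathfrak{a}\ge1$ be integers with $L_n^{(k)}=(p+1)p^{\mathfrak{a}}-1$ and $p>n^{10}$. Then $2^{k-1}<10n^2$; in particular $k<10\log n$.
   Context: The $k$-Lucas sequence is defined by $L_{2-k}^{(k)}=\cdots=L_{-1}^{(k)}=0$, $L_0^{(k)}=2$, $L_1^{(k)}=1$, $L_n^{(k)}=L_{n-1}^{(k)}+\cdots+L_{n-k}^{(k)}$. $\log$ denotes the natural logarithm. *)

From Stdlib Require Import Reals Arith List.
Import ListNotations.

(* k-Lucas sequence: L_{2-k} = ... = L_{-1} = 0, L_0 = 2, L_1 = 1,
   L_n = L_{n-1} + ... + L_{n-k}.  We record only the terms with index n >= 0;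
   terms with negative index are 0, which is automatically handled by summing
   only the (at most k) last available terms. *)

Definition sum_nat (l : list nat) : nat := fold_right Nat.add 0 l.

Fixpoint klucas_list (k n : nat) : list nat :=
  match n with
  | 0 => [2]
  | S m =>
      let prev := klucas_list k m in
      let next := match m with
                  | 0 => 1
                  | _ => sum_nat (skipn (length prev - k) prev)
                  end in
      prev ++ [next]
  end.

Definition klucas (k n : nat) : nat := nth n (klucas_list k n) 0.

From Pilot Require Import Defs.
From Stdlib Require Import Reals Arith Znumtheory ZArith Lia Lra List.
Import ListNotations.
Open Scope nat_scope.

(* If 2^(k-1) >= 10 n^2, the k-Lucas number L_n differs from (3/4) 2^n by at most
   n 2^(n-k) <= 2^n / 80, so X = L_n + 1 is close to (3/4) 2^n and hence at ratio
   at least about 4/3 from every power of two.  But with P = 2^l and p = P +- 1,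
   X = (p+1) p^a equals P^(a+1) (1 + O(a/P)), and p > n^10 forces a <= n << P, so X
   is within a factor 1 + 1/85 of the power of two 2^(l(a+1)).  Finally
   2^(k-1) < 10 n^2 gives 3^k < n^10, whence k <= k ln 3 < 10 ln n. *)

Lemma klucas_list_length k n : length (klucas_list k n) = S n.
Proof. induction n as [|n IH]; simpl; [reflexivity|]. rewrite length_app, IH; simpl; lia. Qed.

Lemma klucas_list_succ k n : klucas_list k (S n) = klucas_list k n ++ [klucas k (S n)].
Proof.
  unfold klucas. cbn [klucas_list].
  rewrite app_nth2, klucas_list_length, Nat.sub_diag by (rewrite klucas_list_length; lia).
  reflexivity.
Qed.

Lemma nth_klucas_list k n i : i <= n -> nth i (klucas_list k n) 0 = klucas k i.
Proof.
  induction n as [|n IH]; intros Hi.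
  - now replace i with 0 by lia.
  - destruct (Nat.eq_dec i (S n)) as [->|Hne]; [reflexivity|].
    rewrite klucas_list_succ, app_nth1 by (rewrite klucas_list_length; lia).
    apply IH; lia.
Qed.

Lemma sum_nat_app l r : Defs.sum_nat (l ++ r) = Defs.sum_nat l + Defs.sum_nat r.
Proof. induction l as [|x l IH]; simpl; [reflexivity|]. unfold Defs.sum_nat in *; simpl; lia. Qed.

Lemma sum_nat_skipn l i : i < length l ->
  Defs.sum_nat (skipn i l) = nth i l 0 + Defs.sum_nat (skipn (S i) l).
Proof.
  revert i; induction l as [|x l IH]; intros i Hi; simpl in *; [lia|].
  destruct i; [reflexivity|]. apply IH; lia.
Qed.

Lemma klucas_succ_sum k n : 1 <= n ->
  klucas k (S n) = Defs.sum_nat (skipn (S n - k) (klucas_list k n)).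
Proof.
  intros Hn. unfold klucas. cbn [klucas_list].
  rewrite app_nth2; rewrite klucas_list_length; [|lia].
  rewrite Nat.sub_diag. destruct n; [lia|]. reflexivity.
Qed.

Lemma klucas_rec k n : 1 <= k -> 2 <= n ->
  klucas k (S n) + (if k <=? n then klucas k (n - k) else 0) = 2 * klucas k n.
Proof.
  intros Hk Hn. destruct n as [|m]; [lia|].
  rewrite (klucas_succ_sum k (S m)), klucas_list_succ, skipn_app, klucas_list_length by lia.
  replace (S (S m) - k - S m) with 0 by lia.
  rewrite sum_nat_app. cbn [skipn Defs.sum_nat fold_right]. rewrite Nat.add_0_r.
  pose proof (klucas_succ_sum k m ltac:(lia)) as Hprev.
  destruct (Nat.leb_spec k (S m)).
  - replace (S (S m) - k) with (S (S m - k)) in * by lia.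
    rewrite (sum_nat_skipn _ (S m - k)), nth_klucas_list in Hprev
      by (try rewrite klucas_list_length; lia).
    lia.
  - replace (S (S m) - k) with 0 by lia. replace (S m - k) with 0 in Hprev by lia.
    simpl skipn in *. lia.
Qed.

Lemma klucas_2 k : 2 <= k -> klucas k 2 = 3.
Proof. intros Hk. destruct k as [|[|k]]; [lia|lia|reflexivity]. Qed.

Lemma klucas_upper_bound k n : 2 <= k -> 2 <= n -> 4 * klucas k n <= 3 * 2 ^ n.
Proof.
  intros Hk Hn. induction n as [|n IH]; [lia|].
  destruct (Nat.eq_dec n 1) as [->|Hn1]; [rewrite klucas_2 by lia; simpl; lia|].
  pose proof (klucas_rec k n ltac:(lia) ltac:(lia)).
  specialize (IH ltac:(lia)). rewrite Nat.pow_succ_r'. lia.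
Qed.

Lemma klucas_le_pow k n : 2 <= k -> klucas k n <= 2 ^ S n.
Proof.
  intros Hk. destruct n as [|[|n]]; [unfold klucas; simpl; lia..|].
  pose proof (klucas_upper_bound k (S (S n)) Hk ltac:(lia)). rewrite Nat.pow_succ_r'. lia.
Qed.

(* [L_n >= (3/4) 2^n - n 2^(n-k)]: the defect [(3/4) 2^n - L_n] vanishes at [n = 2] and
   at most doubles plus [L_(n-k) <= 2^(n-k+1)] at each step. *)
Lemma klucas_lower_bound k n : 2 <= k -> 2 <= n ->
  3 * 2 ^ n * 2 ^ k <= 4 * 2 ^ k * klucas k n + 4 * n * 2 ^ n.
Proof.
  intros Hk Hn. induction n as [|n IH]; [lia|].
  destruct (Nat.eq_dec n 1) as [->|Hn1]; [rewrite klucas_2 by lia; simpl; lia|].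
  specialize (IH ltac:(lia)).
  pose proof (klucas_rec k n ltac:(lia) ltac:(lia)) as Hrec.
  set (c := if k <=? n then klucas k (n - k) else 0) in Hrec.
  assert (Hc : 2 ^ k * c <= 2 * 2 ^ n).
  { unfold c. destruct (Nat.leb_spec k n); [|lia].
    replace (2 * 2 ^ n) with (2 ^ k * 2 ^ S (n - k))
      by (rewrite <- Nat.pow_add_r, <- Nat.pow_succ_r'; f_equal; lia).
    apply Nat.mul_le_mono_l, klucas_le_pow, Hk. }
  rewrite Nat.pow_succ_r'.
  set (K := 2 ^ k) in *. set (N := 2 ^ n) in *.
  set (f := klucas k n) in *. set (g := klucas k (S n)) in *.
  assert (K * g + K * c = 2 * (K * f)) by nia.
  nia.
Qed.

Lemma klucas_lower_bound_large_k k n : 2 <= k -> 4 <= n -> 20 * n ^ 2 <= 2 ^ k ->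
  59 * 2 ^ n <= 80 * klucas k n.
Proof.
  intros Hk Hn HK. pose proof (klucas_lower_bound k n Hk ltac:(lia)) as H.
  set (K := 2 ^ k) in *. set (N := 2 ^ n) in *. set (f := klucas k n) in *.
  assert (HnK : 4 * N * (20 * n ^ 2) <= 4 * N * K) by (apply Nat.mul_le_mono_l, HK).
  assert (HnN : 4 * N * K <= n * N * K) by (apply Nat.mul_le_mono_r, Nat.mul_le_mono_r; lia).
  assert (H20 : 20 * n * (3 * N * K) <= 20 * n * (4 * K * f + 4 * n * N))
    by (apply Nat.mul_le_mono_l, H).
  assert (Hprod : n * (59 * N) * K <= n * (80 * f) * K) by (rewrite Nat.pow_2_r in HnK; lia).
  apply Nat.mul_le_mono_pos_r, Nat.mul_le_mono_pos_l in Hprod; try lia.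
  unfold K; apply Nat.neq_0_lt_0, Nat.pow_nonzero; lia.
Qed.

Lemma succ_pow_mul_sub_le P a : (P + 1) ^ a * (P - a) <= P ^ S a.
Proof.
  induction a as [|a IH]; [simpl; lia|].
  rewrite !Nat.pow_succ_r'.
  destruct (Nat.le_gt_cases (S a) P).
  - set (Y := (P + 1) ^ a) in *. set (Z := P ^ a) in *.
    assert ((P + 1) * (P - S a) <= P * (P - a)) by nia.
    assert (Y * ((P + 1) * (P - S a)) <= Y * (P * (P - a))) by (apply Nat.mul_le_mono_l; auto).
    assert (P * (Y * (P - a)) <= P * (P * Z)) by (apply Nat.mul_le_mono_l; auto).
    lia.
  - replace (P - S a) with 0 by lia. lia.
Qed.

Lemma pow_succ_le_pred_pow P a : 1 <= P -> P ^ S a <= P * (P - 1) ^ a + a * P ^ a.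
Proof.
  intros HP. induction a as [|a IH]; [simpl; lia|].
  rewrite !Nat.pow_succ_r'. rewrite Nat.pow_succ_r' in IH.
  set (Y := (P - 1) ^ a) in *. set (Z := P ^ a) in *.
  replace P with (S (P - 1)) at 3 4 5 6 by lia. nia.
Qed.

Lemma fermat_near_pow P a : 256 <= P -> 256 * a <= P ->
  P ^ S a <= (P + 2) * (P + 1) ^ a /\ 255 * ((P + 2) * (P + 1) ^ a) <= 258 * P ^ S a.
Proof.
  intros HP Ha. pose proof (succ_pow_mul_sub_le P a) as Hsub.
  split.
  - rewrite Nat.pow_succ_r'. apply Nat.mul_le_mono; [lia|apply Nat.pow_le_mono_l; lia].
  - set (Y := (P + 1) ^ a) in *. set (M := P ^ S a) in *.
    assert (H255 : 255 * P <= 256 * (P - a)) by lia.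
    assert (HY : Y * (255 * P) <= Y * (256 * (P - a))) by (apply Nat.mul_le_mono_l, H255).
    assert (HP2 : (P + 2) * (Y * (P - a)) <= (P + 2) * M) by (apply Nat.mul_le_mono_l, Hsub).
    assert (Hfin : 255 * ((P + 2) * Y) * P <= 258 * M * P) by nia.
    apply Nat.mul_le_mono_pos_r in Hfin; lia.
Qed.

Lemma mersenne_near_pow P a : 1 <= P -> 256 * a <= P ->
  P * (P - 1) ^ a <= P ^ S a /\ 255 * P ^ S a <= 256 * (P * (P - 1) ^ a).
Proof.
  intros HP Ha. pose proof (pow_succ_le_pred_pow P a HP) as Hle.
  split.
  - rewrite Nat.pow_succ_r'. apply Nat.mul_le_mono_l, Nat.pow_le_mono_l; lia.
  - rewrite Nat.pow_succ_r' in *.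
    assert (256 * a * P ^ a <= P * P ^ a) by (apply Nat.mul_le_mono_r, Ha).
    lia.
Qed.

Lemma pow2_dichotomy m n : 2 * 2 ^ m <= 2 ^ n \/ 2 ^ n <= 2 ^ m.
Proof.
  destruct (Nat.le_gt_cases n m).
  - right. apply Nat.pow_le_mono_r; lia.
  - left. rewrite <- Nat.pow_succ_r'. apply Nat.pow_le_mono_r; lia.
Qed.

Lemma not_near_pow2_below X m n : 4 <= n -> 59 * 2 ^ n <= 80 * X -> 4 * X <= 3 * 2 ^ n + 4 ->
  2 ^ m <= X -> 258 * 2 ^ m < 255 * X.
Proof.
  intros Hn Hlow Hup HM.
  assert (16 <= 2 ^ n) by (change 16 with (2 ^ 4); apply Nat.pow_le_mono_r; lia).
  destruct (pow2_dichotomy m n); lia.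
Qed.

Lemma not_near_pow2_above X m n : 4 <= n -> 59 * 2 ^ n <= 80 * X -> 4 * X <= 3 * 2 ^ n + 4 ->
  X <= 2 ^ m -> 256 * X < 255 * 2 ^ m.
Proof.
  intros Hn Hlow Hup HM.
  assert (16 <= 2 ^ n) by (change 16 with (2 ^ 4); apply Nat.pow_le_mono_r; lia).
  destruct (pow2_dichotomy m n); lia.
Qed.

Lemma mul_256_le_pow10 n : 4 <= n -> 256 * n <= n ^ 10.
Proof.
  intros Hn. replace (n ^ 10) with (n ^ 9 * n) by (rewrite Nat.mul_comm, <- Nat.pow_succ_r'; reflexivity).
  apply Nat.mul_le_mono_r. change 256 with (4 ^ 4).
  apply Nat.le_trans with (n ^ 4); [apply Nat.pow_le_mono_l | apply Nat.pow_le_mono_r]; lia.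
Qed.

Lemma pow32_gt_pow3 k : 7 <= k -> 10 ^ 5 * 3 ^ k < 32 ^ (k - 1).
Proof.
  induction k as [|k IH]; intros Hk; [lia|].
  destruct (Nat.eq_dec k 6) as [->|Hk6].
  { apply Nat2Z.inj_lt. rewrite Nat2Z.inj_mul, !Nat2Z.inj_pow. reflexivity. }
  specialize (IH ltac:(lia)). replace (S k - 1) with (S (k - 1)) by lia.
  rewrite (Nat.pow_succ_r' 3), (Nat.pow_succ_r' 32). lia.
Qed.

Lemma pow3_lt_pow10_of_pow2_lt k n : 2 <= k -> k + 2 <= n -> 2 ^ (k - 1) < 10 * n ^ 2 -> 3 ^ k < n ^ 10.
Proof.
  intros Hk Hn H. destruct (Nat.le_gt_cases k 6).
  - apply Nat.lt_le_trans with (4 ^ k); [apply Nat.pow_lt_mono_l; lia|].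
    apply Nat.le_trans with (n ^ k); [apply Nat.pow_le_mono_l; lia|].
    apply Nat.pow_le_mono_r; lia.
  - assert (H5 : (2 ^ (k - 1)) ^ 5 < (10 * n ^ 2) ^ 5) by (apply Nat.pow_lt_mono_l; lia).
    replace ((2 ^ (k - 1)) ^ 5) with (32 ^ (k - 1)) in H5
      by (rewrite <- Nat.pow_mul_r, Nat.mul_comm, Nat.pow_mul_r; reflexivity).
    rewrite Nat.pow_mul_l, <- Nat.pow_mul_r in H5.
    pose proof (pow32_gt_pow3 k ltac:(lia)).
    apply (Nat.mul_lt_mono_pos_l (10 ^ 5)); [apply Nat.neq_0_lt_0, Nat.pow_nonzero; lia|].
    change (2 * 5) with 10 in H5. lia.
Qed.

Lemma ln_3_ge_1 : (1 <= ln 3)%R.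
Proof.
  rewrite <- (ln_exp 1). destruct (Rle_lt_or_eq_dec _ _ exp_le_3) as [Hlt | ->]; [|lra].
  left. apply ln_increasing; [apply exp_pos | exact Hlt].
Qed.

Lemma lt_10_ln_of_pow3_lt k n : 3 ^ k < n ^ 10 -> (INR k < 10 * ln (INR n))%R.
Proof.
  intros H.
  assert (Hn : (0 < INR n)%R) by (apply lt_0_INR; destruct n; [simpl in H; lia | lia]).
  apply lt_INR in H. rewrite !pow_INR in H.
  apply ln_increasing in H; [|apply pow_lt; simpl; lra].
  rewrite !ln_pow in H by (simpl; lra).
  replace (INR 3) with 3%R in H by (simpl; lra). replace (INR 10) with 10%R in H by (simpl; lra).
  pose proof ln_3_ge_1. pose proof (pos_INR k). nra.
Qed.

Lemma klucas_eq_forces_small_k p l n k a :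
  (p = 2 ^ l + 1 \/ p = 2 ^ l - 1) -> 2 <= k -> k + 2 <= n ->
  klucas k n = (p + 1) * p ^ a - 1 -> n ^ 10 < p -> 2 ^ (k - 1) < 10 * n ^ 2.
Proof.
  intros Hp Hk Hn Heq Hpn.
  destruct (Nat.lt_ge_cases (2 ^ (k - 1)) (10 * n ^ 2)) as [|Hbig]; [assumption|exfalso].
  assert (HK : 20 * n ^ 2 <= 2 ^ k)
    by (replace (2 ^ k) with (2 * 2 ^ (k - 1)) by (rewrite <- Nat.pow_succ_r'; f_equal; lia); lia).
  pose proof (klucas_lower_bound_large_k k n Hk ltac:(lia) HK) as Hlow.
  pose proof (klucas_upper_bound k n Hk ltac:(lia)) as Hup.
  assert (H16 : 16 <= 2 ^ n) by (change 16 with (2 ^ 4); apply Nat.pow_le_mono_r; lia).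
  pose proof (mul_256_le_pow10 n ltac:(lia)) as H256.
  set (P := 2 ^ l) in *.
  assert (HP : n ^ 10 <= P) by lia.
  assert (Hpa : 1 <= p ^ a) by (apply Nat.neq_0_lt_0, Nat.pow_nonzero; lia).
  set (X := (p + 1) * p ^ a) in *.
  assert (HX : klucas k n + 1 = X) by nia.
  assert (Ha : a <= n).
  { apply (Nat.pow_le_mono_r_iff 2); [lia|].
    apply Nat.le_trans with (p ^ a); [apply Nat.pow_le_mono_l; lia | nia]. }
  assert (HM : P ^ S a = 2 ^ (l * S a)) by (symmetry; apply Nat.pow_mul_r).
  destruct Hp as [Hp | Hp].
  - replace X with ((P + 2) * (P + 1) ^ a) in HX by (unfold X; rewrite Hp; f_equal; lia).
    pose proof (fermat_near_pow P a ltac:(lia) ltac:(lia)) as [Hge Hle].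
    rewrite HM in Hge, Hle.
    pose proof (not_near_pow2_below ((P + 2) * (P + 1) ^ a) (l * S a) n); lia.
  - replace X with (P * (P - 1) ^ a) in HX by (unfold X; rewrite Hp; f_equal; lia).
    pose proof (mersenne_near_pow P a ltac:(lia) ltac:(lia)) as [Hle Hge].
    rewrite HM in Hge, Hle.
    pose proof (not_near_pow2_above (P * (P - 1) ^ a) (l * S a) n); lia.
Qed.

Theorem mainTheorem12 (p l n k a : nat) :
  (1 <= l)%nat ->
  (p = 2 ^ l + 1 \/ p = 2 ^ l - 1)%nat ->
  prime (Z.of_nat p) ->
  (2 <= k)%nat -> (k + 2 <= n)%nat -> (1 <= a)%nat ->
  klucas k n = ((p + 1) * p ^ a - 1)%nat ->
  (n ^ 10 < p)%nat ->
  (2 ^ (k - 1) < 10 * n ^ 2)%nat /\ (INR k < 10 * ln (INR n))%R.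
Proof.
  intros _ Hp _ Hk Hn _ Heq Hpn.
  assert (Hsmall : 2 ^ (k - 1) < 10 * n ^ 2)
    by exact (klucas_eq_forces_small_k p l n k a Hp Hk Hn Heq Hpn).
  split; [exact Hsmall|].
  apply lt_10_ln_of_pow3_lt, pow3_lt_pow10_of_pow2_lt; assumption.
Qed.
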